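(* For any nonempty configuration and integer shift $G$, the expected number of times a full execution of the inter-level sampler (Algorithm 1, run until it returns a level) enters the refinement loop (i.e. hits the boundary case $x=A_\ell(G)$) is at most $N/M(G)$.
   Context: Fix an integer $b\ge 2$. There is a set $\mathcal L$ of $N$ levels, which are consecutive integers. Each level $\ell$ holds a finite (possibly empty) multiset of normalized significands, each an integer in $[2^{b-1},2^b)$. Let $z$ be the total number of stored significands over all levels; assume $z<2^b$. For each level, $SS_\ell$ is the sum of its significands (so $SS_\ell=0$ iff the level is empty); set $SS_\ell=0$ for integers $\ell\notin\mathcal L$. The level weight is $W_\ell=SS_\ell2^\ell$. For an integer global shift $G$, $A_\ell(G)=\lfloor W_\ell2^G\rfloor+1$ if $SS_\ell>0$ and $A_\ell(G)=0$ if $SS_\ell=0$; $A(G)=\sum_\ell A_\ell(G)$ and $M(G)=\sum_\ell W_\ell2^G$. The configuration is nonempty if $z\ge1$. Inter-level sampler (Algorithm 1), with shift $G$ and $A=A(G)$: it performs independent outer iterations. In an outer iteration, draw $x$ uniformly from $\{1,\dots,A\}$ and scan the levels in decreasing order starting from the largest nonempty level. At the current level $\ell$: if $x<A_\ell(G)$, return $\ell$; if $x=A_\ell(G)$, run the refinement loop for $m=1,2,\dots$: draw $r$ uniformly from $\{0,\dots,2^b-1\}$ independently, let $t=\lfloor SS_\ell 2^{\ell+G+mb}\rfloor \bmod 2^b$; if $r<t$ return $\ell$; else if $r>t$ or $\ell+G+mb\ge 0$, abandon this outer iteration and start a new one; otherwise continue with $m+1$. If $x>A_\ell(G)$, set $x\leftarrow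 x-A_\ell(G)$ and move to the next lower level. *)

From HB Require Import structures.
From mathcomp Require Import all_boot all_order all_algebra.
From mathcomp Require Import all_classical all_reals all_analysis.
Set Implicit Arguments. Unset Strict Implicit. Unset Printing Implicit Defensive.
Import Order.TTheory GRing.Theory Num.Theory.
Local Open Scope ring_scope.

(* Configuration: levels are the N consecutive integers lo, lo+1, ..., lo+N-1;
   level lo+i (i < N) holds the multiset (list) S i of significands. *)
Section Sampler.
Variables (R : realType) (b N : nat) (lo G : int) (S : nat -> seq nat).

Definition SS (i : nat) : nat := sumn (S i).

Definition Aof (i : nat) : int :=
  if (0 < SS i)%N
  then Num.floor ((SS i)%:R * (2 : R) ^ (lo + i%:Z + G)) + 1
  else 0.

Definition Atot : int := \sum_(i < N) Aof i.

Definition Mof : R := \sum_(i < N) (SS i)%:R * (2 : R) ^ (lo + i%:Z + G).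

Definition tval (i m : nat) : int :=
  (Num.floor ((SS i)%:R * (2 : R) ^ (lo + i%:Z + G + (m * b)%N%:Z))
     %% (2 ^ b)%N%:Z)%Z.

Inductive scan_res := SReturn of nat | SBoundary of nat | SFail.

(* scan the levels with indices k-1, k-2, ..., 0 (decreasing level order);
   empty levels have A = 0 < x and are passed over with x unchanged. *)
Fixpoint scan (k : nat) (x : int) : scan_res :=
  match k with
  | 0%N => SFail
  | k'.+1 =>
      let a := Aof k' in
      if x < a then SReturn k'
      else if x == a then SBoundary k'
      else scan k' (x - a)
  end.

(* Refinement loop at level index i, starting with counter m, consuming the
   exact list rs of draws r. Some true = return, Some false = abandon the outer
   iteration, None = rs is not a complete trace of the loop. *)
Fixpoint refine (i m : nat) (rs : seq nat) : option bool :=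
  match rs with
  | [::] => None
  | r :: rs' =>
      if (2 ^ b <= r)%N then None else
      let t := tval i m in
      if r%:Z < t then (if rs' is [::] then Some true else None)
      else if (t < r%:Z) || (0 <= lo + i%:Z + G + (m * b)%N%:Z)
      then (if rs' is [::] then Some false else None)
      else refine i m.+1 rs'
  end.

(* One outer iteration, given its draws: x and the refinement draws rs.
   Result: Some (returned?, number of boundary hits) or None if not a
   complete trace. *)
Definition iter_out (it : int * seq nat) : option (bool * nat) :=
  let: (x, rs) := it in
  if (1 <= x) && (x <= Atot) then
    match scan N x with
    | SReturn _ => if rs is [::] then Some (true, 0%N) else None
    | SBoundary i => omap (fun ret => (ret, 1%N)) (refine i 1 rs)
    | SFail => None
    end
  else None.

Definition iter_prob (it : int * seq nat) : R :=
  (Atot%:~R)^-1 * ((2 ^ b)%N%:R) ^- (size it.2).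

Fixpoint exec_ok (tr : seq (int * seq nat)) : bool :=
  match tr with
  | [::] => false
  | [:: it] => if iter_out it is Some (true, _) then true else false
  | it :: tr' =>
      (if iter_out it is Some (false, _) then true else false) && exec_ok tr'
  end.

Definition exec_hits (tr : seq (int * seq nat)) : nat :=
  sumn [seq (if iter_out it is Some (_, h) then h else 0%N) | it <- tr].

Definition exec_prob (tr : seq (int * seq nat)) : R :=
  \prod_(it <- tr) iter_prob it.

Definition expected_boundary_hits : \bar R :=
  (\esum_(tr in [set tr | exec_ok tr]) ((exec_prob tr) * (exec_hits tr)%:R)%:E)%R.

End Sampler.

From Pilot Require Import Defs.
From HB Require Import structures.
From mathcomp Require Import all_boot all_order all_algebra.
From mathcomp Require Import all_classical all_reals all_analysis.
From mathcomp Require Import finmap zify ring lra.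
From Stdlib Require Import Lia.
Import Order.TTheory GRing.Theory Num.Theory.
Set Implicit Arguments. Unset Strict Implicit. Unset Printing Implicit Defensive.
Local Open Scope ring_scope.

(* One outer iteration draws x uniformly among A = sum_l A_l values, and a nonempty
   level l owns A_l consecutive ones: A_l - 1 of them return l at once, the last one is
   the boundary case.  From the boundary, the refinement loop compares uniform base-2^b
   digits with the successive base-2^b digits of frac(W_l 2^G) and returns with
   probability frac(W_l 2^G) = W_l 2^G - (A_l - 1).  So an iteration returns with
   probability M/A and hits the boundary with probability n/A, n <= N being the number
   of nonempty levels.  Splitting off the first iteration, induction on the number of
   iterations shows that complete executions have total probability at most 1 and that
   their expected number of hits H satisfies H <= n/A + (1 - M/A) H, i.e. H <= n/M. *)

Definition snd_fiber (T U : eqType) (L : seq (T * U)) (x : T) : seq U :=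
  [seq u.2 | u <- L & u.1 == x].

Lemma snd_fiber_uniq (T U : eqType) (L : seq (T * U)) x : uniq L -> uniq (snd_fiber L x).
Proof.
move=> uL; rewrite map_inj_in_uniq ?filter_uniq // => -[y u] [z v].
by rewrite !mem_filter /= => /andP[/eqP-> _] /andP[/eqP-> _] ->.
Qed.

Definition behead_fiber (T : eqType) (L : seq (seq T)) (x : T) : seq (seq T) :=
  [seq behead u | u <- L & ohead u == Some x].

Lemma behead_fiber_uniq (T : eqType) (L : seq (seq T)) x : uniq L -> uniq (behead_fiber L x).
Proof.
move=> uL; rewrite map_inj_in_uniq ?filter_uniq // => -[|y u] [|z v];
by rewrite !mem_filter //= => /andP[/eqP[->] _] /andP[/eqP[->] _] ->.
Qed.

Lemma size_behead_fiber (T : eqType) (L : seq (seq T)) x n :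
  all (fun u => size u <= n.+1)%N L -> all (fun s => size s <= n)%N (behead_fiber L x).
Proof.
move=> hL; apply/allP => _ /mapP[[|y u] + ->]; rewrite mem_filter // => /andP[_ uL].
exact: (allP hL _ uL).
Qed.

Lemma exists_size_bound (T : eqType) (L : seq (seq T)) :
  exists n, all (fun u => size u <= n)%N L.
Proof. by exists (\max_(u <- L) size u); apply/allP => u uL; apply: leq_bigmax_seq. Qed.

Lemma uniq_pmap_undup (T : eqType) (s : seq (option T)) : uniq (pmap id (undup s)).
Proof. by apply: (pmap_uniq (g := Some)) => [[]|]; rewrite ?undup_uniq. Qed.

Section FiberSums.
Variable V : nmodType.

Lemma sum_fibers (T K : eqType) (k : T -> K) (s : seq T) (F : T -> V) :
  \sum_(u <- s) F u = \sum_(x <- undup (map k s)) \sum_(u <- s | k u == x) F u.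
Proof.
under [RHS]eq_bigr do rewrite big_mkcond /=.
rewrite exchange_big /= [LHS]big_seq [RHS]big_seq; apply: eq_bigr => u us.
rewrite -big_mkcond /= big_const_seq.
have ku : k u \in undup (map k s) by rewrite mem_undup map_f.
have -> : count (fun x => k u == x) (undup (map k s)) = count_mem (k u) (undup (map k s)).
  by apply: eq_count => x /=; rewrite eq_sym.
by rewrite count_uniq_mem ?undup_uniq // ku /= addr0.
Qed.

Lemma sum_by_fst (T U : eqType) (L : seq (T * U)) (F : T * U -> V) :
  \sum_(u <- L) F u = \sum_(x <- undup (map fst L)) \sum_(s <- snd_fiber L x) F (x, s).
Proof.
rewrite (sum_fibers fst); apply: eq_bigr => x _.
by rewrite big_map big_filter; apply: eq_bigr => -[y u] /= /eqP ->.
Qed.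

Lemma sum_by_head (T : eqType) (L : seq (seq T)) (F : seq T -> V) : F [::] = 0 ->
  \sum_(u <- L) F u =
  \sum_(x <- pmap id (undup (map ohead L))) \sum_(s <- behead_fiber L x) F (x :: s).
Proof.
move=> F0; rewrite (sum_fibers ohead) big_pmap; apply: eq_bigr => -[x|] _ /=.
  by rewrite big_map big_filter; apply: eq_bigr => -[|y u] //= /eqP[->].
by rewrite big1 // => -[|y u].
Qed.

End FiberSums.

Section SumBounds.
Variable R : numDomainType.

Lemma ler_sum_support (T : eqType) (s1 s2 : seq T) (c : T -> R) :
  uniq s1 -> uniq s2 -> (forall x, 0 <= c x) -> (forall x, x \notin s2 -> c x = 0) ->
  \sum_(x <- s1) c x <= \sum_(x <- s2) c x.
Proof.
move=> u1 u2 c0 cz.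
have -> : \sum_(x <- s1) c x = \sum_(x <- [seq x <- s1 | x \in s2]) c x.
  rewrite big_filter [RHS]big_mkcond; apply: eq_bigr => x _.
  by case: ifP => // /negbT /cz.
set s3 := [seq x <- s1 | x \in s2].
have s3s2 : perm_eq s2 (s3 ++ [seq x <- s2 | x \notin s3]).
  apply: uniq_perm => [//||x].
    rewrite cat_uniq filter_uniq ?filter_uniq // andbT.
    by apply/hasPn => x; rewrite mem_filter => /andP[].
  rewrite mem_cat mem_filter; case x3 : (x \in s3) => //=.
  by move: x3; rewrite mem_filter => /andP[].
by rewrite (perm_big _ s3s2) big_cat /= lerDl sumr_ge0.
Qed.

Lemma ler_sum_supp1 (T : eqType) (s : seq T) (a : T) (F : T -> R) :
  uniq s -> (forall x, 0 <= F x) -> (forall x, x != a -> F x = 0) ->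
  \sum_(x <- s) F x <= F a.
Proof.
move=> us F0 Fa; have -> : F a = \sum_(x <- [:: a]) F x by rewrite big_seq1.
by apply: ler_sum_support => // x; rewrite mem_seq1 => /Fa.
Qed.

Lemma sum_eq_le1 (T : eqType) (s : seq T) (a : T) : uniq s ->
  \sum_(x <- s) (x == a)%:R <= 1 :> R.
Proof.
move=> us; apply: le_trans (ler_sum_supp1 (a := a) us _ _) _.
- by move=> x; rewrite ler0n.
- by move=> x /negbTE ->.
- by rewrite eqxx.
Qed.

Lemma sum_iota_lt_eq_gt (K t : nat) (a c d : R) : (t < K)%N ->
  \sum_(r <- iota 0 K) (if (r < t)%N then a else if r == t then c else d)
  = t%:R * a + c + (K - t.+1)%:R * d.
Proof.
move=> tK; have -> : K = (t + (1 + (K - t.+1)))%N by lia.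
rewrite !iotaD !big_cat /= big_seq1 ltnn eqxx addrA; congr (_ + _ + _).
  rewrite (eq_big_seq (fun _ => a)); last by move=> r; rewrite mem_iota => /andP[_ ->].
  by rewrite big_const_seq count_predT size_iota iter_addr_0 mulr_natl.
rewrite (eq_big_seq (fun _ => d)); last first.
  by move=> r; rewrite mem_iota => /andP[h _]; rewrite ltnNge ltnW ?gtn_eqF //; lia.
by rewrite big_const_seq count_predT size_iota iter_addr_0 mulr_natl; congr (_ *+ _); lia.
Qed.

End SumBounds.

Section Frac.
Variable R : archiFieldType.

Definition fracr (x : R) : R := x - (Num.floor x)%:~R.

Lemma fracr_ge0 x : 0 <= fracr x.
Proof. by rewrite subr_ge0 floor_le. Qed.

Lemma fracr_lt1 x : fracr x < 1.
Proof. by rewrite ltrBlDl -[X in _ + X]/(1%:~R) -intrD floorD1_gt. Qed.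

Lemma fracr_int (z : int) : fracr z%:~R = 0.
Proof. by rewrite /fracr intrKfloor subrr. Qed.

(* Multiplying by n shifts the next base-n digit of x out of the fractional part. *)
Lemma natr_mul_fracr (n : nat) x : (0 < n)%N ->
  n%:R * fracr x = ((Num.floor (n%:R * x) %% n%:Z)%Z)%:~R + fracr (n%:R * x).
Proof.
move=> n_gt0; set f := Num.floor x; set y := fracr x.
have Hx : n%:R * x = n%:R * y + (f * n%:Z)%:~R.
  by rewrite /y /fracr intrM mulrBr -[n%:R]/((n%:Z)%:~R) [_ * (n%:Z)%:~R]mulrC subrK.
have Hf : Num.floor (n%:R * x) = Num.floor (n%:R * y) + f * n%:Z.
  by rewrite Hx floorDrz ?intrKfloor // intr_int.
have ny_ge0 : 0 <= Num.floor (n%:R * y) by rewrite floor_ge0 mulr_ge0 ?fracr_ge0.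
have ny_lt : Num.floor (n%:R * y) < n%:Z.
  by rewrite floor_lt_int -[X in _ < X]mulr1 ltr_pM2l ?ltr0n ?fracr_lt1.
rewrite Hf [X in (X %% _)%Z]addrC modzMDl modz_small ?ny_ge0 ?ny_lt //.
rewrite [fracr (_ * x)]/fracr Hf intrD Hx; ring.
Qed.

End Frac.

Section Refinement.
Variables (R : realType) (b : nat) (lo G : int) (S : nat -> seq nat) (i : nat).

Local Notation K := (2 ^ b)%N.
Local Notation KR := (K%:R : R).
Local Notation refine := (refine R b lo G S i).

Lemma KR_gt0 : 0 < KR.
Proof. by rewrite ltr0n expn_gt0. Qed.

Definition refine_exp (m : nat) : int := lo + i%:Z + G + (m * b)%N%:Z.

Definition shifted_weight (m : nat) : R := (SS S i)%:R * (2 : R) ^ refine_exp m.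

Definition digit (m : nat) : nat := `|Defs.tval R b lo G S i m|%N.

(* The loop entered with counter [m] returns iff its draw beats the [m]-th digit, or ties
   it and the loop then returns from [m.+1]; see [return_probS]. *)
Definition return_prob (m : nat) : R := ((digit m)%:R + fracr (shifted_weight m)) / KR.

Definition draws_prob (rs : seq nat) : R := KR ^- size rs.

Definition refine_value (m : nat) (a c : R) (rs : seq nat) : R :=
  draws_prob rs * (a * (refine m rs == Some true)%:R + c * (refine m rs == Some false)%:R).

Lemma tval_digit m : Defs.tval R b lo G S i m = (digit m)%:Z.
Proof. by rewrite gez0_abs // modz_ge0 // eqz_nat -lt0n expn_gt0. Qed.

Lemma digit_lt m : (digit m < K)%N.
Proof. by rewrite -ltz_nat -tval_digit ltz_pmod // ltz_nat expn_gt0. Qed.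

Lemma shifted_weightS m : shifted_weight m.+1 = KR * shifted_weight m.
Proof.
rewrite /shifted_weight.
have -> : refine_exp m.+1 = b%:Z + refine_exp m by rewrite /refine_exp mulSn PoszD; lia.
by rewrite exprzDr ?unitfE ?pnatr_eq0 // natrX mulrCA.
Qed.

Lemma fracr_shifted_weightS m :
  KR * fracr (shifted_weight m) = (digit m.+1)%:R + fracr (shifted_weight m.+1).
Proof.
by rewrite natr_mul_fracr ?expn_gt0 // -shifted_weightS [(digit _)%:R]pmulrn -tval_digit.
Qed.

Lemma fracr_shifted_weight_int m : 0 <= refine_exp m -> fracr (shifted_weight m) = 0.
Proof.
rewrite /shifted_weight; case: (refine_exp m) => // n _.
have -> : (SS S i)%:R * (2 : R) ^ n = ((SS S i * 2 ^ n)%N%:Z)%:~R.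
  by rewrite -pmulrn natrM natrX.
exact: fracr_int.
Qed.

Lemma return_probS m : return_prob m.+1 = fracr (shifted_weight m).
Proof.
by rewrite /return_prob -fracr_shifted_weightS mulrC mulKf // lt0r_neq0 ?KR_gt0.
Qed.

Lemma return_prob_ge0 m : 0 <= return_prob m.
Proof. by rewrite divr_ge0 ?ler0n // addr_ge0 ?ler0n ?fracr_ge0. Qed.

Lemma return_prob_le1 m : return_prob m <= 1.
Proof.
rewrite ler_pdivrMr ?KR_gt0 // mul1r.
apply: le_trans (_ : (digit m).+1%:R <= KR); last by rewrite ler_nat digit_lt.
by rewrite -addn1 natrD lerD2l ltW ?fracr_lt1.
Qed.

Lemma refine_exp_ge0 m : (0 < b)%N -> (absz (lo + i%:Z + G)%R <= m)%N -> 0 <= refine_exp m.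
Proof.
move=> b_gt0 hm; rewrite /refine_exp -lerBlDl sub0r.
apply: le_trans (ler_norm _) _; rewrite normrN -abszE lez_nat.
by apply: leq_trans hm _; rewrite leq_pmulr.
Qed.

Lemma draws_prob_cons r rs : draws_prob (r :: rs) = KR^-1 * draws_prob rs.
Proof. by rewrite /draws_prob /= exprS invfM. Qed.

Lemma draws_prob_ge0 rs : 0 <= draws_prob rs.
Proof. by rewrite invr_ge0 exprn_ge0. Qed.

Lemma refine_value_nil m a c : refine_value m a c [::] = 0.
Proof. by rewrite /refine_value /= !mulr0 addr0 mulr0. Qed.

Lemma refine_value_cons m a c r s : refine_value m a c (r :: s) = KR^-1 *
  (if (K <= r)%N then 0
   else if (r < digit m)%N then a * (s == [::])%:R
   else if (digit m < r)%N || (0 <= refine_exp m) then c * (s == [::])%:R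
   else refine_value m.+1 a c s).
Proof.
rewrite /refine_value draws_prob_cons -mulrA; congr (_ * _).
rewrite /= -/(refine_exp m) tval_digit !ltz_nat.
case: ifP => _; first by rewrite !mulr0 addr0 mulr0.
have draws_prob_nil : draws_prob [::] = 1 by rewrite /draws_prob expr0 invr1.
by case: ifP => _; [|case: ifP => _ //]; case: s => [|? ?];
  rewrite /= ?draws_prob_nil ?(mulr0, mulr1, mul1r, addr0, add0r).
Qed.

Definition next_value (m : nat) (a c : R) (r : nat) : R :=
  if (r < digit m)%N then a
  else if r == digit m then
    (if 0 <= refine_exp m then c
     else a * return_prob m.+1 + c * (1 - return_prob m.+1))
  else c.

Lemma sum_next_value m a c :
  \sum_(r <- iota 0 K) next_value m a c r = KR * (a * return_prob m + c * (1 - return_prob m)).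
Proof.
have KR_neq0 : KR != 0 by rewrite lt0r_neq0 ?KR_gt0.
rewrite (sum_iota_lt_eq_gt _ _ _ (digit_lt m)) natrB ?digit_lt //.
case: ifP => [/fracr_shifted_weight_int sw0|_].
  by rewrite /return_prob sw0; field.
by rewrite return_probS /return_prob; field.
Qed.

Section FirstDraw.
Variables (m : nat) (a c : R).
Hypotheses (a_ge0 : 0 <= a) (c_ge0 : 0 <= c).
Hypothesis next_bound : refine_exp m < 0 -> forall L, uniq L ->
  \sum_(rs <- L) refine_value m.+1 a c rs <= a * return_prob m.+1 + c * (1 - return_prob m.+1).

Lemma next_value_ge0 r : 0 <= next_value m a c r.
Proof.
rewrite /next_value; do !case: ifP => _ //.
by rewrite addr_ge0 // mulr_ge0 // ?return_prob_ge0 // subr_ge0 return_prob_le1.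
Qed.

Lemma sum_refine_value_first_draw r Ls : uniq Ls ->
  \sum_(s <- Ls) refine_value m a c (r :: s) <=
  (if (r < K)%N then next_value m a c r / KR else 0).
Proof.
move=> uLs; under eq_bigr do rewrite refine_value_cons.
rewrite -mulr_sumr; case: (ltnP r K) => [rK|Kr]; last first.
  by rewrite big1 ?mulr0 // => s _; rewrite Kr.
rewrite mulrC ler_pM2r ?invr_gt0 ?KR_gt0 // /next_value.
have last_draw x : 0 <= x -> \sum_(s <- Ls) x * (s == [::])%:R <= x.
  by move=> x_ge0; rewrite -mulr_sumr -[X in _ <= X]mulr1 ler_wpM2l ?sum_eq_le1.
case: ltngtP => _ /=; rewrite ?last_draw //.
case: ifP => [_|/negbT e_lt0]; first exact: last_draw.
by apply: next_bound; rewrite // ltNge.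
Qed.

Lemma sum_refine_value_step L : uniq L ->
  \sum_(rs <- L) refine_value m a c rs <= a * return_prob m + c * (1 - return_prob m).
Proof.
move=> uL; rewrite (sum_by_head _ (refine_value_nil m a c)).
set first := fun r => if (r < K)%N then next_value m a c r / KR else 0.
apply: le_trans (_ : \sum_(r <- iota 0 K) first r <= _).
  apply: le_trans (ler_sum _ (fun r _ => sum_refine_value_first_draw r (behead_fiber_uniq r uL))) _.
  apply: ler_sum_support; rewrite ?uniq_pmap_undup ?iota_uniq // => r.
    by rewrite /first; case: ifP => // _; rewrite divr_ge0 ?ler0n ?next_value_ge0.
  by rewrite mem_iota add0n /first leq0n /= => /negbTE ->.
rewrite (eq_big_seq (fun r => next_value m a c r / KR)) => [|r]; last first.
  by rewrite mem_iota add0n /first => /andP[_ ->].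
by rewrite -mulr_suml sum_next_value mulrC mulKf ?lt0r_neq0 ?KR_gt0.
Qed.

End FirstDraw.

Lemma sum_refine_value_le m a c L : (0 < b)%N -> 0 <= a -> 0 <= c -> uniq L ->
  \sum_(rs <- L) refine_value m a c rs <= a * return_prob m + c * (1 - return_prob m).
Proof.
(* Once the exponent [refine_exp] is nonnegative the loop stops for good. *)
move=> b_gt0 a0 c0; have [k] : exists k, (absz (lo + i%:Z + G)%R <= m + k)%N.
  by exists (absz (lo + i%:Z + G)%R); rewrite leq_addl.
elim: k m L => [|k IH] m L hk uL; apply: sum_refine_value_step => // e_lt0.
  by move: e_lt0; rewrite ltNge refine_exp_ge0 // -(addn0 m).
by move=> L' uL'; apply: IH; rewrite // addSnnS.
Qed.

End Refinement.

Section Levels.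
Variables (R : realType) (lo G : int) (S : nat -> seq nat).

Local Notation Aof := (Aof R lo G S).
Local Notation scan := (scan R lo G S).

(* Level [i] owns [slots i] consecutive values of the uniform draw [x]. *)
Definition slots (i : nat) : nat := `|Aof i|%N.

Lemma Aof_ge0 i : 0 <= Aof i.
Proof. by rewrite /Aof; case: ifP => // _; rewrite addr_ge0 // floor_ge0 mulr_ge0 ?exprz_ge0. Qed.

Lemma Aof_slots i : Aof i = (slots i)%:Z.
Proof. by rewrite gez0_abs ?Aof_ge0. Qed.

Lemma slots_gt0 i : (0 < slots i)%N = (0 < SS S i)%N.
Proof.
rewrite -ltz_nat -Aof_slots /Aof; case: ifP => // _.
by rewrite ltzD1 floor_ge0 mulr_ge0 ?exprz_ge0.
Qed.

Lemma scan_shift k x : 0 < x -> scan k.+1 ((slots k)%:Z + x) = scan k x.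
Proof.
move=> x_gt0; rewrite /= Aof_slots ltNge lerDl (ltW x_gt0) /= gt_eqF ?ltrDl //.
by rewrite [_ - _]addrC addKr.
Qed.

Definition outcome_value (u : R) (v : nat -> R) (o : scan_res) : R :=
  match o with SReturn _ => u | SBoundary i => v i | SFail => 0 end.

Lemma sum_scan_outcomes k u v :
  \sum_(j <- iota 0 (\sum_(i < k) slots i)) outcome_value u v (scan k j.+1%:Z) =
  \sum_(i < k) (if (0 < SS S i)%N then (slots i).-1%:R * u + v i else 0).
Proof.
elim: k => [|k IH]; first by rewrite !big_ord0 big_nil.
have -> : (\sum_(i < k.+1) slots i = slots k + \sum_(i < k) slots i)%N.
  by rewrite big_ord_recr addnC.
rewrite [RHS]big_ord_recr -IH iotaD big_cat add0n [LHS]addrC; congr (_ + _).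
  rewrite -{1}(addn0 (slots k)) iotaDl big_map; apply: eq_bigr => j _.
  by rewrite -addnS PoszD scan_shift.
rewrite -slots_gt0; case: (posnP (slots k)) => [->|a_gt0]; first by rewrite big_nil.
rewrite (eq_big_seq (fun j => if (j < (slots k).-1)%N then u
                              else if j == (slots k).-1 then v k else 0)); last first.
  move=> j; rewrite mem_iota add0n /= => hj; rewrite Aof_slots ltz_nat eqz_nat.
  have -> : (j.+1 < slots k)%N = (j < (slots k).-1)%N by lia.
  have -> : (j.+1 == slots k) = (j == (slots k).-1) by apply/eqP/eqP; lia.
  by case: ltngtP => // h; lia.
by rewrite sum_iota_lt_eq_gt ?prednK // subnn mul0r addr0.
Qed.

End Levels.

Section Iteration.
Variables (R : realType) (b N : nat) (lo G : int) (S : nat -> seq nat).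
Hypothesis b_gt0 : (0 < b)%N.

Local Notation iter_out := (iter_out R b N lo G S).
Local Notation iter_prob := (iter_prob R b N lo G S).
Local Notation slots := (slots R lo G S).
Local Notation A := (Atot R N lo G S).
Local Notation AR := (A%:~R : R).
Local Notation rho i := (return_prob R b lo G S i 1).
Local Notation nonempty i := (0 < SS S i)%N.

Lemma Atot_ge0 : 0 <= A.
Proof. by rewrite sumr_ge0 // => i _; rewrite Aof_ge0. Qed.

Lemma Atot_slots : A = (\sum_(i < N) slots i)%N%:Z.
Proof.
rewrite /Atot; elim/big_rec2: _ => // i z n _ ->.
by rewrite Aof_slots PoszD.
Qed.

Lemma slots_return_prob i : nonempty i ->
  (slots i).-1%:R + rho i = (SS S i)%:R * (2 : R) ^ (lo + i%:Z + G).
Proof.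
move=> SS_gt0; rewrite return_probS /fracr /shifted_weight /refine_exp (mul0n b) addr0.
have -> : Num.floor ((SS S i)%:R * (2 : R) ^ (lo + i%:Z + G)) = (slots i).-1%:Z.
  apply: (addIr 1); rewrite -PoszD addn1 prednK ?slots_gt0 //.
  by rewrite -Aof_slots /Aof SS_gt0.
rewrite -pmulrn; lra.
Qed.

Definition iter_returns it := if iter_out it is Some (true, _) then true else false.
Definition iter_abandons it := if iter_out it is Some (false, _) then true else false.
Definition iter_hits it : nat := if iter_out it is Some (_, h) then h else 0%N.

Lemma iter_returns_abandons it : iter_returns it -> iter_abandons it = false.
Proof. by rewrite /iter_returns /iter_abandons; case: iter_out => [[[]]|]. Qed.

(* [iter_value 1 1 0] is the probability of completing an iteration; [iter_value 0 V 1]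
   charges one unit per boundary hit plus [V] per abandoned iteration, which is what one
   step of the bound [H <= V] on the expected number of hits needs. *)
Definition iter_value (a c g : R) it : R := iter_prob it *
  (a * (iter_returns it)%:R + c * (iter_abandons it)%:R + g * (iter_hits it)%:R).

Definition level_value (a c g : R) (i : nat) : R := a * rho i + c * (1 - rho i) + g.

Lemma iter_valueE a c g x rs : iter_value a c g (x, rs) =
  if (1 <= x <= A) then AR^-1 *
    match scan R lo G S N x with
    | SReturn _ => a * (rs == [::])%:R
    | SBoundary i => refine_value b lo G S i 1 (a + g) (c + g) rs
    | SFail => 0
    end
  else 0.
Proof.
rewrite /iter_value /iter_returns /iter_abandons /iter_hits /=.
case: ifP => _; last by rewrite !mulr0 !addr0 mulr0.
rewrite -mulrA; congr (_ * _); case: (scan _ _ _ _ _ _) => [j|i|] /=.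
- by case: rs => [|r rs] /=; rewrite ?(mulr0, mulr1, addr0, expr0, invr1, mul1r).
- rewrite /refine_value; case: (refine _ _ _ _ _ _ _ _) => [[]|] /=;
    rewrite ?(mulr0, mulr1, addr0, add0r) //.
- by rewrite !mulr0 !addr0 mulr0.
Qed.

Section Weights.
Variables a c g : R.
Hypotheses (a_ge0 : 0 <= a) (c_ge0 : 0 <= c) (g_ge0 : 0 <= g).

Lemma level_value_ge0 i : 0 <= level_value a c g i.
Proof.
by rewrite !addr_ge0 // mulr_ge0 // ?return_prob_ge0 // subr_ge0 return_prob_le1.
Qed.

Definition outcome_bound (x : int) : R :=
  if (1 <= x <= A) then AR^-1 * outcome_value a (level_value a c g) (scan R lo G S N x) else 0.

Lemma sum_iter_value_fiber x L : uniq L ->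
  \sum_(rs <- L) iter_value a c g (x, rs) <= outcome_bound x.
Proof.
move=> uL; under eq_bigr do rewrite iter_valueE.
rewrite /outcome_bound; case: ifP => _; last by rewrite big1.
rewrite -mulr_sumr ler_wpM2l ?invr_ge0 ?ler0z ?Atot_ge0 //.
case: (scan _ _ _ _ _ _) => [j|i|] /=; last by rewrite big1.
  by rewrite -mulr_sumr -[X in _ <= X]mulr1 ler_wpM2l ?sum_eq_le1.
apply: le_trans (@sum_refine_value_le R b lo G S i 1 (a + g) (c + g) L b_gt0 _ _ uL) _;
  rewrite ?addr_ge0 //.
by rewrite /level_value le_eqVlt; apply/orP; left; apply/eqP; ring.
Qed.

Lemma outcome_bound_ge0 x : 0 <= outcome_bound x.
Proof.
rewrite /outcome_bound; case: ifP => // _.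
rewrite mulr_ge0 ?invr_ge0 ?ler0z ?Atot_ge0 //.
by case: (scan _ _ _ _ _ _) => [j|i|] //=; rewrite level_value_ge0.
Qed.

Lemma sum_iter_value_le U : uniq U ->
  \sum_(it <- U) iter_value a c g it <=
  AR^-1 * \sum_(i < N) (if nonempty i then (slots i).-1%:R * a + level_value a c g i else 0).
Proof.
move=> uU; rewrite sum_by_fst.
apply: le_trans (ler_sum _ (fun x _ => sum_iter_value_fiber x (snd_fiber_uniq x uU))) _.
set n := (\sum_(i < N) slots i)%N.
have A_n : A = n%:Z by rewrite Atot_slots.
apply: le_trans (ler_sum_support (s2 := [seq j.+1%:Z | j <- iota 0 n]) (undup_uniq _) _ _ _) _.
- by rewrite map_inj_uniq ?iota_uniq // => p q [].
- exact: outcome_bound_ge0.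
- move=> x; rewrite /outcome_bound; case: ifP => // /andP[x_ge1 x_leA] /negP[].
  apply/mapP; exists (absz x).-1; last by rewrite prednK -?ltz_nat gez0_abs ?(le_trans _ x_ge1).
  by rewrite mem_iota add0n -ltz_nat -A_n; lia.
rewrite big_map -/n -sum_scan_outcomes mulr_sumr big_seq [X in _ <= X]big_seq.
by apply: ler_sum => j; rewrite mem_iota add0n /outcome_bound A_n lez_nat /= => ->.
Qed.

End Weights.

Lemma Atot_nonempty : AR = \sum_(i < N) (if nonempty i then (slots i).-1%:R + 1 else 0).
Proof.
rewrite Atot_slots -pmulrn natr_sum; apply: eq_bigr => i _.
rewrite -(slots_gt0 R lo G); case: (posnP (slots i)) => [->|s_gt0] //.
by rewrite natr1 prednK.
Qed.

Lemma Mof_nonempty :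
  Mof R N lo G S = \sum_(i < N) (if nonempty i then (slots i).-1%:R + rho i else 0).
Proof.
apply: eq_bigr => i _; case: ifP => [/slots_return_prob -> //|/negbT].
by rewrite -eqn0Ngt => /eqP ->; rewrite mul0r.
Qed.

Lemma sum_iter_mass_le1 U : 0 < A -> uniq U -> \sum_(it <- U) iter_value 1 1 0 it <= 1.
Proof.
move=> A_gt0 uU; apply: le_trans (sum_iter_value_le _ _ _ uU) _ => //.
rewrite (eq_bigr (fun i : 'I_N => if nonempty i then (slots i).-1%:R + 1 else 0)).
  by rewrite -Atot_nonempty mulVf ?lt0r_neq0 ?ltr0z.
by move=> i _; rewrite /level_value; case: ifP => // _; rewrite mulr1 !mul1r subrKC addr0.
Qed.

Lemma sum_iter_hits_le U : 0 < A -> 0 < Mof R N lo G S -> uniq U ->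
  \sum_(it <- U) iter_value 0 (N%:R / Mof R N lo G S) 1 it <= N%:R / Mof R N lo G S.
Proof.
set V := N%:R / _ => A_gt0 M_gt0 uU.
have V_ge0 : 0 <= V by rewrite divr_ge0 ?ler0n ?(ltW M_gt0).
apply: le_trans (sum_iter_value_le _ V_ge0 _ uU) _ => //.
rewrite ler_pdivrMl ?ltr0z // mulrC.
have -> : \sum_(i < N) (if nonempty i then (slots i).-1%:R * 0 + level_value 0 V 1 i else 0)
    = V * AR - V * Mof R N lo G S + \sum_(i < N) (if nonempty i then 1 else 0).
  rewrite Atot_nonempty Mof_nonempty !mulr_sumr -sumrB -big_split /=.
  by apply: eq_bigr => i _; case: ifP => _; rewrite /level_value; ring.
rewrite divfK ?lt0r_neq0 // -addrA gerDl addrC subr_le0 -[N in N%:R]card_ord -sumr_const.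
by apply: ler_sum => i _; case: ifP.
Qed.

End Iteration.

Section Executions.
Variables (R : realType) (b N : nat) (lo G : int) (S : nat -> seq nat).
Hypotheses (b_gt0 : (0 < b)%N) (A_gt0 : 0 < Atot R N lo G S) (M_gt0 : 0 < Mof R N lo G S).

Local Notation iter_prob := (iter_prob R b N lo G S).
Local Notation iter_returns := (iter_returns R b N lo G S).
Local Notation iter_abandons := (iter_abandons R b N lo G S).
Local Notation iter_hits := (iter_hits R b N lo G S).
Local Notation exec_ok := (exec_ok R b N lo G S).
Local Notation exec_prob := (exec_prob R b N lo G S).
Local Notation exec_hits := (exec_hits R b N lo G S).

Definition exec_mass tr : R := if exec_ok tr then exec_prob tr else 0.

Definition exec_hit_mass tr : R := if exec_ok tr then exec_prob tr * (exec_hits tr)%:R else 0.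

Lemma exec_ok_cons it s :
  exec_ok (it :: s) = if s is [::] then iter_returns it else iter_abandons it && exec_ok s.
Proof. by case: s. Qed.

Lemma iter_prob_ge0 it : 0 <= iter_prob it.
Proof. by rewrite mulr_ge0 ?draws_prob_ge0 // invr_ge0 ler0z Atot_ge0. Qed.

Lemma exec_mass_cons it s : exec_mass (it :: s) =
  iter_prob it * ((s == [::])%:R * (iter_returns it)%:R + (iter_abandons it)%:R * exec_mass s).
Proof.
rewrite /exec_mass exec_ok_cons /exec_prob big_cons.
case: s => [|it' s].
  by rewrite big_nil; case: iter_returns; rewrite /= ?(mul1r, mulr1, mulr0, addr0).
rewrite (_ : (it' :: s == [::]) = false) //.
by case: iter_abandons; case: exec_ok; rewrite /= ?(mul0r, mul1r, mulr0, add0r).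
Qed.

Lemma exec_hit_mass_cons it s : exec_hit_mass (it :: s) = iter_prob it *
  ((s == [::])%:R * (iter_returns it)%:R * (iter_hits it)%:R
   + (iter_abandons it)%:R * ((iter_hits it)%:R * exec_mass s + exec_hit_mass s)).
Proof.
rewrite /exec_hit_mass /exec_mass exec_ok_cons /exec_prob big_cons /exec_hits /= natrD.
case: s => [|it' s].
  by rewrite big_nil; case: iter_returns; rewrite /= ?(mul1r, mulr1, mulr0, mul0r, addr0).
rewrite (_ : (it' :: s == [::]) = false) //.
by case: iter_abandons; case: exec_ok; rewrite /=; ring.
Qed.

Lemma sum_exec_mass_le1 T : uniq T -> \sum_(tr <- T) exec_mass tr <= 1.
Proof.
have [n] := exists_size_bound T; elim: n T => [|n IH] T hT uT.
  by rewrite big_seq big1 // => -[|it s] /(allP hT).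
rewrite (sum_by_head _ (erefl : exec_mass [::] = 0)).
apply: le_trans (sum_iter_mass_le1 b_gt0 A_gt0 (uniq_pmap_undup _)); apply: ler_sum => it _.
under eq_bigr do rewrite exec_mass_cons.
rewrite -mulr_sumr ler_wpM2l ?iter_prob_ge0 // !mul1r mul0r addr0 big_split /=.
rewrite -mulr_suml -mulr_sumr lerD //.
  by rewrite ler_piMl ?ler0n ?sum_eq_le1 ?behead_fiber_uniq.
by rewrite ler_piMr ?ler0n ?IH ?behead_fiber_uniq ?size_behead_fiber.
Qed.

Lemma sum_exec_hit_mass_le T : uniq T ->
  \sum_(tr <- T) exec_hit_mass tr <= N%:R / Mof R N lo G S.
Proof.
set V := N%:R / _; have V_ge0 : 0 <= V by rewrite divr_ge0 ?ler0n ?(ltW M_gt0).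
have [n] := exists_size_bound T; elim: n T => [|n IH] T hT uT.
  by rewrite big_seq big1 // => -[|it s] /(allP hT).
rewrite (sum_by_head _ (erefl : exec_hit_mass [::] = 0)).
apply: le_trans (sum_iter_hits_le b_gt0 A_gt0 M_gt0 (uniq_pmap_undup _)); apply: ler_sum => it _.
under eq_bigr do rewrite exec_hit_mass_cons.
rewrite -mulr_sumr ler_wpM2l ?iter_prob_ge0 // mul0r add0r big_split /= -!mulr_suml -mulr_sumr.
have uTit := behead_fiber_uniq it uT.
have nil_le1 := @sum_eq_le1 R _ _ [::] uTit.
have mass_le1 := sum_exec_mass_le1 uTit.
have hits_leV := IH _ (size_behead_fiber it hT) uTit.
case: (boolP (iter_returns it)) => [/iter_returns_abandons -> | _] /=.
  by rewrite mulr1 !mul0r addr0 mulr0 add0r mul1r ler_piMl.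
case: iter_abandons; rewrite !(mulr0, mul0r, mul1r, mulr1, add0r) //.
by rewrite big_split /= -mulr_sumr [_ + (iter_hits it)%:R]addrC lerD // ler_piMr.
Qed.

End Executions.

Lemma exists_nonempty_level (N : nat) (S : nat -> seq nat) :
  (forall i, (i < N)%N -> forall s, s \in S i -> (0 < s)%N) ->
  (0 < \sum_(i < N) size (S i))%N -> exists i : 'I_N, (0 < SS S i)%N.
Proof.
move=> S_gt0; rewrite lt0n sum_nat_eq0 => /forallPn[i]; rewrite /= size_eq0 => Si.
exists i; move: (S_gt0 i (ltn_ord i)); rewrite /SS.
by case: (S i) Si => // s l _ /(_ s (mem_head s l)); rewrite /= addn_gt0 => ->.
Qed.

Section Positivity.
Variables (R : realType) (N : nat) (lo G : int) (S : nat -> seq nat) (i : 'I_N).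
Hypothesis i_nonempty : (0 < SS S i)%N.

Lemma Atot_gt0 : 0 < Atot R N lo G S.
Proof.
rewrite /Atot (bigD1 i) //= ltr_pwDl ?sumr_ge0 // => [|j _]; last exact: Aof_ge0.
by rewrite Aof_slots ltz_nat slots_gt0.
Qed.

Lemma Mof_gt0 : 0 < Mof R N lo G S.
Proof.
rewrite /Mof (bigD1 i) //= ltr_pwDl ?sumr_ge0 // => [|j _].
  by rewrite mulr_gt0 ?ltr0n // exprz_gt0.
by rewrite mulr_ge0 // exprz_ge0.
Qed.

End Positivity.

Theorem mainTheorem4 (R : realType) (b N : nat) (lo G : int) (S : nat -> seq nat) :
  (2 <= b)%N ->
  (forall i, (i < N)%N -> forall s, s \in S i -> (2 ^ b.-1 <= s < 2 ^ b)%N) ->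
  (\sum_(i < N) size (S i) < 2 ^ b)%N ->
  (1 <= \sum_(i < N) size (S i))%N ->
  (@expected_boundary_hits R b N lo G S <= ((N%:R : R) / @Mof R N lo G S)%:E)%E.
Proof.
move=> b_ge2 S_normalized _ z_gt0.
have b_gt0 : (0 < b)%N by apply: leq_trans b_ge2.
have [i i_nonempty] : exists i : 'I_N, (0 < SS S i)%N.
  apply: exists_nonempty_level z_gt0 => j j_lt s /(S_normalized j j_lt) /andP[s_ge _].
  by rewrite (leq_trans _ s_ge) // expn_gt0.
have A_gt0 := Atot_gt0 R lo G i_nonempty; have M_gt0 := Mof_gt0 R lo G i_nonempty.
rewrite /expected_boundary_hits /esum; apply: ge_ereal_sup => _ [X [X_fin X_ok] <-].
rewrite fsbig_finite //= sumEFin lee_fin.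
rewrite (eq_big_seq (exec_hit_mass R b N lo G S)) ?sum_exec_hit_mass_le ?fset_uniq //.
by move=> tr; rewrite in_fset_set // => /set_mem /X_ok; rewrite /exec_hit_mass => ->.
Qed.
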